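(* Let $G$ be a proper interval graph with no twin vertices, let $\sigma$ be a proper interval ordering of $G$, let each node of the line-incompatibility graph $\widehat{G}$ carry a positive weight, and let $I_{\widehat{G}}$ be a maximum-weight independent set of $\widehat{G}$. Let $x,y,z$ be vertices of $G$ with $x\prec y\prec z$ in $\sigma$ and $xz\in I_{\widehat{G}}$. (1) If $xy\notin I_{\widehat{G}}$ and $yz\in I_{\widehat{G}}$, then $xy$ is non-adjacent in $\widehat{G}$ to every node of the form $x_\ell x\in I_{\widehat{G}}$, and there is a vertex $w$ such that $yw\in I_{\widehat{G}}$, $\{x,w\}\notin E(G)$, and $z\prec w$. (2) If $xy\in I_{\widehat{G}}$ and $yz\notin I_{\widehat{G}}$, then $yz$ is non-adjacent in $\widehat{G}$ to every node of the form $zz_r\in I_{\widehat{G}}$, and there is a vertex $w$ such that $wy\in I_{\widehat{G}}$, $\{w,z\}\notin E(G)$, and $w\prec x$.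
   Context: All graphs are finite, simple and undirected. Two adjacent vertices $u,v$ are twins if $N[u]=N[v]$. A vertex ordering $\sigma$ of $G$ is a proper interval ordering if for all vertices $x\prec y\prec z$ in $\sigma$, $\{x,z\}\in E(G)$ implies $\{x,y\},\{y,z\}\in E(G)$; a graph is a proper interval graph if and only if it admits a proper interval ordering. The line-incompatibility graph $\widehat{G}$ of $G$ has one node $uv$ for each edge $\{u,v\}$ of $G$, two nodes being adjacent iff the corresponding edges are of the form $\{u,v\},\{v,w\}$ with $\{u,w\}\notin E(G)$. A maximum-weight independent set is an independent set maximizing the total weight of its nodes. *)

From HB Require Import structures.
From mathcomp Require Import all_boot all_order all_algebra.
Set Implicit Arguments. Unset Strict Implicit. Unset Printing Implicit Defensive.
Import Order.TTheory GRing.Theory Num.Theory.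

Definition simple_graph (T : finType) (e : rel T) : Prop :=
  symmetric e /\ irreflexive e.

Definition cnbhd (T : finType) (e : rel T) (u : T) : {set T} :=
  [set v | (v == u) || e u v].

Definition twin_free (T : finType) (e : rel T) : Prop :=
  forall u v : T, u != v -> e u v -> cnbhd e u <> cnbhd e v.

Definition vertex_ordering (T : finType) (sigma : seq T) : Prop :=
  perm_eq sigma (enum T).

Definition prec (T : eqType) (sigma : seq T) (x y : T) : bool :=
  index x sigma < index y sigma.

Definition proper_interval_ordering (T : finType) (e : rel T) (sigma : seq T)
  : Prop :=
  vertex_ordering sigma /\
  forall x y z : T, prec sigma x y -> prec sigma y z -> e x z ->
    e x y /\ e y z.

(* Nodes of the line-incompatibility graph: edges {u,v} of G, as 2-sets. *)
Definition lnode (T : finType) (e : rel T) (A : {set T}) : bool :=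
  [exists u, exists v, e u v && (A == [set u; v])].

Definition ladj (T : finType) (e : rel T) (A B : {set T}) : bool :=
  [exists u, exists v, exists w,
     [&& e u v, e v w, u != w, ~~ e u w,
         A == [set u; v] & B == [set v; w]]].

Definition lindependent (T : finType) (e : rel T) (S : {set {set T}}) : Prop :=
  (forall A, A \in S -> lnode e A) /\
  (forall A B, A \in S -> B \in S -> ~~ ladj e A B).

Definition weight_of (T : finType) (R : numDomainType)
  (wt : {set T} -> R) (S : {set {set T}}) : R :=
  (\sum_(A in S) wt A)%R.

Definition max_weight_independent (T : finType) (R : numDomainType)
  (e : rel T) (wt : {set T} -> R) (I : {set {set T}}) : Prop :=
  lindependent e I /\
  forall S, lindependent e S -> (weight_of wt S <= weight_of wt I)%R.

From HB Require Import structures.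
From mathcomp Require Import all_boot all_order all_algebra.
From mathcomp Require Import zify.
Import Order.TTheory GRing.Theory Num.Theory.
Set Implicit Arguments. Unset Strict Implicit.

(* Since all weights are positive, a maximum-weight independent set I of the
   line-incompatibility graph is maximal: every node outside I conflicts with
   a node of I.  Two nodes of I sharing an endpoint have adjacent far ends, and
   in a proper interval ordering a common neighbour of x and z is a neighbour
   of every y between them.  For xy outside I, a conflicting edge xb of I would
   make b a common neighbour of x and z, hence of y; so the conflict is an edge
   yw of I with w adjacent to z but not to x, which forces z ≺ w.  Part (2) is
   part (1) for the reversed ordering. *)

Lemma eq_set2 (T : finType) (u v x y : T) :
  [set u; v] = [set x; y] -> (u = x /\ v = y) \/ (u = y /\ v = x).
Proof.
move=> uv_xy.
have ux : u \in [set x; y] by rewrite -uv_xy set21.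
have vx : v \in [set x; y] by rewrite -uv_xy set22.
have xu : x \in [set u; v] by rewrite uv_xy set21.
have yu : y \in [set u; v] by rewrite uv_xy set22.
by case/set2P: ux vx xu yu => ? /set2P[] ? /set2P[] ? /set2P[] ?; subst; auto.
Qed.

Section LineIncompatibility.

Variables (T : finType) (e : rel T).
Hypotheses (e_sym : symmetric e) (e_irr : irreflexive e).

Lemma lnode_set2 a b : lnode e [set a; b] = e a b.
Proof.
apply/idP/idP => [/existsP[u /existsP[v /andP[euv /eqP/eq_set2]]]|eab].
  by case=> -[-> ->] //; rewrite e_sym.
by apply/existsP; exists a; apply/existsP; exists b; rewrite eab eqxx.
Qed.

Lemma ladj_sym : symmetric (ladj e).
Proof.
suff ladjC A B : ladj e A B -> ladj e B A by move=> A B; apply/idP/idP; apply: ladjC.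
case/existsP=> u /existsP[v /existsP[w /and5P[euv evw nuw neuw /andP[/eqP-> /eqP->]]]].
apply/existsP; exists w; apply/existsP; exists v; apply/existsP; exists u.
by rewrite e_sym evw e_sym euv eq_sym nuw e_sym neuw !(setUC [set v]) !eqxx.
Qed.

Lemma ladj_irr A : ~~ ladj e A A.
Proof.
apply/existsP=> -[u /existsP[v /existsP[w /and5P[euv _ nuw _ /andP[/eqP-> /eqP]]]]].
by case/eq_set2=> -[uv _]; [rewrite uv e_irr in euv | rewrite uv eqxx in nuw].
Qed.

Lemma ladj_set2l x y B : ladj e [set x; y] B ->
  exists b, [/\ B = [set x; b], ~~ e y b, e x b & y != b] \/
            [/\ B = [set y; b], ~~ e x b, e y b & x != b].
Proof.
case/existsP=> u /existsP[v /existsP[w /and5P[euv evw nuw neuw /andP[/eqP xy_uv /eqP->]]]].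
by exists w; case: (eq_set2 xy_uv) => -[-> ->]; [right | left].
Qed.

Lemma nladj_clique (A B : {set T}) :
  (forall u w, u \in A -> w \in B -> u != w -> e u w) -> ~~ ladj e A B.
Proof.
move=> clique.
apply/existsP=> -[u /existsP[v /existsP[w /and5P[_ _ nuw neuw /andP[/eqP uvA /eqP vwB]]]]].
by rewrite clique ?uvA ?vwB ?set21 ?set22 in neuw.
Qed.

Lemma lindependent_common_end I v a b :
  lindependent e I -> [set v; a] \in I -> [set v; b] \in I -> a != b -> e a b.
Proof.
move=> [I_node I_indep] vaI vbI nab; move: (I_indep _ _ vaI vbI); apply: contraNT => neab.
have eva : e v a by rewrite -lnode_set2 I_node.
have evb : e v b by rewrite -lnode_set2 I_node.
apply/existsP; exists a; apply/existsP; exists v; apply/existsP; exists b.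
by rewrite (e_sym a) eva evb nab neab (setUC [set a]) !eqxx.
Qed.

Lemma max_weight_independent_maximal (R : realFieldType) (wt : {set T} -> R) I N :
  (forall A, lnode e A -> 0 < wt A)%R -> max_weight_independent e wt I ->
  lnode e N -> N \notin I -> exists2 B, B \in I & ladj e N B.
Proof.
move=> wt_pos [[I_node I_indep] I_max] N_node NnI.
have [/exists_inP //|no_conflict] := boolP [exists B in I, ladj e N B].
have NI_indep : lindependent e (N |: I).
  split=> [A|A B]; first by case/setU1P=> [->|/I_node].
  have N_indep C : C \in I -> ~~ ladj e N C.
    by move=> CI; apply: contra no_conflict => NC; apply/exists_inP; exists C.
  case/setU1P=> [->|AI] /setU1P[->|BI].
  - exact: ladj_irr.
  - exact: N_indep.
  - by rewrite ladj_sym N_indep.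
  - exact: I_indep.
have := I_max _ NI_indep; rewrite /weight_of big_setU1 //.
by rewrite gerDr leNgt wt_pos.
Qed.

End LineIncompatibility.

Lemma prec_neq (T : eqType) (s : seq T) a b : prec s a b -> a != b.
Proof. by apply: contraTneq => ->; rewrite /prec ltnn. Qed.

Lemma prec_trans (T : eqType) (s : seq T) a b c :
  prec s a b -> prec s b c -> prec s a c.
Proof. exact: ltn_trans. Qed.

Lemma prec_total (T : finType) (s : seq T) a b :
  vertex_ordering s -> a != b -> prec s a b \/ prec s b a.
Proof.
move=> s_ord ab; have s_all c : c \in s by rewrite (perm_mem s_ord) mem_enum.
rewrite /prec; case: ltngtP => [|| /(index_inj a (s_all a) (s_all b)) a_b]; auto.
by rewrite a_b eqxx in ab.
Qed.

Lemma index_rev (T : eqType) (s : seq T) x :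
  uniq s -> x \in s -> index x (rev s) = size s - (index x s).+1.
Proof.
move=> s_uniq xs; have := index_mem x s; rewrite xs => x_lt.
have i_lt : size s - (index x s).+1 < size s by lia.
have x_rev : nth x (rev s) (size s - (index x s).+1) = x.
  by rewrite nth_rev // (_ : size s - _ = index x s) ?nth_index //; lia.
by rewrite -{1}x_rev index_uniq ?rev_uniq ?size_rev.
Qed.

Lemma prec_rev (T : finType) (s : seq T) a b :
  vertex_ordering s -> prec (rev s) a b = prec s b a.
Proof.
move=> s_ord; have s_all c : c \in s by rewrite (perm_mem s_ord) mem_enum.
have s_uniq : uniq s by rewrite (perm_uniq s_ord) enum_uniq.
rewrite /prec !index_rev //.
have := index_mem a s; have := index_mem b s; rewrite !s_all; lia.
Qed.

Lemma proper_interval_ordering_rev (T : finType) (e : rel T) (s : seq T) :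
  symmetric e -> proper_interval_ordering e s ->
  proper_interval_ordering e (rev s).
Proof.
move=> e_sym [s_ord s_pio]; split=> [|x y z]; first by rewrite /vertex_ordering perm_rev.
rewrite !prec_rev // e_sym => yx zy ezx.
by have [ezy eyx] := s_pio _ _ _ zy yx ezx; rewrite e_sym eyx e_sym.
Qed.

Section ProperIntervalOrdering.

Variables (T : finType) (e : rel T) (sigma : seq T).
Hypotheses (e_sym : symmetric e) (e_irr : irreflexive e).
Hypothesis sigma_pio : proper_interval_ordering e sigma.

Local Notation "a ≺ b" := (prec sigma a b) (at level 70).

Lemma pio_common_nbr x y z b :
  x ≺ y -> y ≺ z -> e x z -> e x b -> e z b -> b != y -> e y b.
Proof.
have [s_ord s_pio] := sigma_pio.
move=> xy yz exz exb ezb by_.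
have [exy eyz] := s_pio _ _ _ xy yz exz.
have ebz : e b z by rewrite e_sym.
have [-> | bx] := eqVneq b x; first by rewrite e_sym.
have [-> | bz] := eqVneq b z; first done.
case: (prec_total s_ord by_) => [b_y | y_b].
- case: (prec_total s_ord bx) => [b_x | x_b].
  + by have [eby _] := s_pio _ _ _ b_y yz ebz; rewrite e_sym.
  + by have [_ eby] := s_pio _ _ _ x_b b_y exy; rewrite e_sym.
- case: (prec_total s_ord bz) => [b_z | z_b].
  + by have [] := s_pio _ _ _ y_b b_z eyz.
  + by have [] := s_pio _ _ _ xy y_b exb.
Qed.

Lemma pio_nonnbr_beyond x z b :
  x ≺ z -> e x z -> e z b -> ~~ e x b -> x != b -> z ≺ b.
Proof.
have [s_ord s_pio] := sigma_pio.
move=> xz exz ezb nexb xb.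
have zb : z != b by apply: contraTneq ezb => <-; rewrite e_irr.
case: (prec_total s_ord zb) => // b_z.
suff exb : e x b by rewrite exb in nexb.
case: (prec_total s_ord xb) => [x_b | b_x].
- by have [] := s_pio _ _ _ x_b b_z exz.
- by rewrite e_sym in ezb; have [ebx _] := s_pio _ _ _ b_x xz ezb; rewrite e_sym.
Qed.

Lemma nladj_left_extension I xl x y z :
  lindependent e I -> xl ≺ x -> x ≺ y -> y ≺ z ->
  [set xl; x] \in I -> [set x; z] \in I -> ~~ ladj e [set x; y] [set xl; x].
Proof.
move=> I_ind xlx xy yz xlxI xzI.
have exz : e x z by rewrite -lnode_set2 // I_ind.1.
have exxl : e x xl by rewrite e_sym -lnode_set2 // I_ind.1.
have xlz : xl != z by apply: prec_neq (prec_trans xlx (prec_trans xy yz)).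
have exlz : e xl z.
  by apply: (lindependent_common_end e_sym I_ind _ xzI xlz); rewrite setUC.
have [exly _] := sigma_pio.2 _ _ _ (prec_trans xlx xy) yz exlz.
have [exy _] := sigma_pio.2 _ _ _ xy yz exz.
by apply: nladj_clique => u w /set2P[]-> /set2P[]->; rewrite ?eqxx // => _; rewrite e_sym.
Qed.

Lemma blocking_edge_beyond (R : realFieldType) (wt : {set T} -> R) I x y z :
  (forall A, lnode e A -> 0 < wt A)%R -> max_weight_independent e wt I ->
  x ≺ y -> y ≺ z -> [set x; z] \in I -> [set y; z] \in I -> [set x; y] \notin I ->
  exists w, [/\ [set y; w] \in I, ~~ e x w & z ≺ w].
Proof.
move=> wt_pos I_max xy yz xzI yzI xynI.
have I_ind := I_max.1.
have exz : e x z by rewrite -lnode_set2 // I_ind.1.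
have [exy eyz] := sigma_pio.2 _ _ _ xy yz exz.
have xy_node : lnode e [set x; y] by rewrite lnode_set2.
have [B BI] := max_weight_independent_maximal e_sym e_irr wt_pos I_max xy_node xynI.
case/ladj_set2l=> b [[B_xb neyb exb yb]|[B_yb nexb eyb xb]]; subst B.
  have zb : z != b by apply: contraNneq neyb => <-.
  have ezb := lindependent_common_end e_sym I_ind xzI BI zb.
  by rewrite (pio_common_nbr xy yz exz exb ezb) ?(eq_sym b) in neyb.
exists b; split=> //.
have zb : z != b by apply: contraNneq nexb => <-.
have ezb := lindependent_common_end e_sym I_ind yzI BI zb.
exact: pio_nonnbr_beyond (prec_trans xy yz) exz ezb nexb xb.
Qed.

End ProperIntervalOrdering.

Theorem lemma8 (R : realFieldType) (T : finType) (e : rel T) (sigma : seq T)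
  (wt : {set T} -> R) (I : {set {set T}}) (x y z : T) :
  simple_graph e ->
  twin_free e ->
  proper_interval_ordering e sigma ->
  (forall A : {set T}, lnode e A -> (0 < wt A)%R) ->
  max_weight_independent e wt I ->
  prec sigma x y -> prec sigma y z ->
  [set x; z] \in I ->
  ( ([set x; y] \notin I -> [set y; z] \in I ->
      (forall xl : T, prec sigma xl x -> [set xl; x] \in I ->
         ~~ ladj e [set x; y] [set xl; x]) /\
      exists w : T, [/\ [set y; w] \in I, ~~ e x w & prec sigma z w])
  /\
    ([set x; y] \in I -> [set y; z] \notin I ->
      (forall zr : T, prec sigma z zr -> [set z; zr] \in I ->
         ~~ ladj e [set y; z] [set z; zr]) /\
      exists w : T, [/\ [set w; y] \in I, ~~ e w z & prec sigma w x]) ).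
Proof.
move=> [e_sym e_irr] _ pio wt_pos I_max xy yz xzI.
have pio_rev := proper_interval_ordering_rev e_sym pio.
have precr a b : prec (rev sigma) a b = prec sigma b a := prec_rev a b pio.1.
have rev_yz : prec (rev sigma) z y by rewrite precr.
have rev_xy : prec (rev sigma) y x by rewrite precr.
have zxI : [set z; x] \in I by rewrite setUC.
split=> xyI yzI; split.
- move=> xl xlx xlI.
  exact: (nladj_left_extension e_sym pio I_max.1 xlx xy yz xlI xzI).
- exact: (blocking_edge_beyond e_sym e_irr pio wt_pos I_max xy yz xzI yzI xyI).
- move=> zr zzr zrI; rewrite setUC [[set z; zr]]setUC.
  have rev_zzr : prec (rev sigma) zr z by rewrite precr.
  have zrzI : [set zr; z] \in I by rewrite setUC.
  exact: (nladj_left_extension e_sym pio_rev I_max.1 rev_zzr rev_yz rev_xy zrzI zxI).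
- have yxI : [set y; x] \in I by rewrite setUC.
  have zynI : [set z; y] \notin I by rewrite setUC.
  have [w [ywI nezw wx]] :=
    blocking_edge_beyond e_sym e_irr pio_rev wt_pos I_max rev_yz rev_xy zxI yxI zynI.
  by exists w; rewrite setUC e_sym -precr.
Qed.
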